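(* Let $\mathcal K$ be a 2-category. (1) The following data form a 2-category $\mathrm{Mnd}^\iota(\mathcal K)$: 0-cells are monads in $\mathcal K$; 1-cells $t\to t'$ are the 1-cells $(V,\psi)$ of $\mathrm{EM}^w(\mathcal K)$; 2-cells $(V,\psi)\Rightarrow(W,\phi)$ are 2-cells $\omega:V\Rightarrow W$ of $\mathcal K$ satisfying $\omega t\ast\psi=W\mu\ast\phi t\ast t'\omega t\ast t'\psi\ast t'\eta'V$; horizontal and vertical compositions are those of $\mathcal K$. Moreover there is a 2-functor $G^\iota:\mathrm{Mnd}^\iota(\mathcal K)\to\mathrm{EM}^w(\mathcal K)$ which is the identity on 0-cells and 1-cells and sends a 2-cell $\omega:(V,\psi)\Rightarrow(W,\phi)$ to $\omega t\ast\psi\ast\eta'V$. (2) The following data form a 2-category $\mathrm{Mnd}^\pi(\mathcal K)$: 0-cells are monads in $\mathcal K$; 1-cells are the 1-cells of $\mathrm{EM}^w(\mathcal K)$; 2-cells $(V,\psi)\Rightarrow(W,\phi)$ are 2-cells $\omega:V\Rightarrow W$ of $\mathcal K$ satisfying $\phi\ast t'\omega=W\mu\ast\phi t\ast\eta'Wt\ast\omega t\ast\psi$; compositions are those of $\mathcal K$. Moreover there is a 2-functor $G^\pi:\mathrm{Mnd}^\pi(\mathcal K)\to\mathrm{EM}^w(\mathcal K)$ which is the identity on 0-cells and 1-cells and sends $\omega$ to $\phi\ast\eta'W\ast\omega$.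
   Context: Conventions in a 2-category $\mathcal K$: horizontal composition and whiskering by juxtaposition in the order of functor composition; identity 1-cell of $k$ written $k$, identity 2-cell of $V$ written $V$; vertical composition $\ast$ with $\alpha\ast\beta$ meaning $\beta$ then $\alpha$. A monad $(t,\mu,\eta)$ on $k$: $t:k\to k$, $\mu:tt\Rightarrow t$, $\eta:k\Rightarrow t$, associative and unital; in the 2-categories below, horizontal composite of 1-cells $(V,\psi):t\to t'$ and $(V',\psi'):t'\to t''$ is $(V'V,V'\psi\ast\psi'V)$ and the identity 1-cell on $(t,\mu,\eta)$ (on $k$) is $(k,t)$. The 2-category $\mathrm{EM}^w(\mathcal K)$: 0-cells are monads; a 1-cell $(t,\mu,\eta)\to(t',\mu',\eta')$ ($t$ on $k$, $t'$ on $k'$) is $(V,\psi)$, $V:k\to k'$, $\psi:t'V\Rightarrow Vt$, with $V\mu\ast\psi t\ast t'\psi=\psi\ast\mu'V$; a 2-cell $(V,\psi)\Rightarrow(W,\phi)$ is $\varrho:V\Rightarrow Wt$ with $W\mu\ast\varrho t\ast\psi=W\mu\ast\phi t\ast t'\varrho$ and $\varrho=W\mu\ast\phi t\ast\eta'Wt\ast\varrho$; identity 2-cell on $(W,\phi)$ is $\phi\ast\eta'W$; horizontal composite of 2-cells $\varrho:(V,\psi)\Rightarrow(W,\phi)$, $\varrho':(V',\psi')\Rightarrow(W',\phi')$ is $W'W\mu\ast W'\varrho t\ast W'\psi\ast\varrho'V$; vertical composite of $\varrho$ and $\tau:(W,\phi)\Rightarrow(U,\theta)$ is $U\mu\ast\tau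 t\ast\varrho$. *)

Set Implicit Arguments.
Unset Strict Implicit.

(* comp1 g f  = "g f"  (f first, then g: order of functor composition) *)
(* vcomp a b  = "a * b" (b first, then a)                              *)
(* hcomp a b  = "a b" : C2 (g f) (g' f') for a : g => g', b : f => f'  *)
Record TwoCatData := {
  Obj : Type;
  Hom : Obj -> Obj -> Type;
  C2 : forall a b : Obj, Hom a b -> Hom a b -> Type;
  id1 : forall a : Obj, Hom a a;
  comp1 : forall a b c : Obj, Hom b c -> Hom a b -> Hom a c;
  id2 : forall (a b : Obj) (f : Hom a b), C2 f f;
  vcomp : forall (a b : Obj) (f g h : Hom a b), C2 g h -> C2 f g -> C2 f h;
  hcomp : forall (a b c : Obj) (g g' : Hom b c) (f f' : Hom a b),
      C2 g g' -> C2 f f' -> C2 (comp1 g f) (comp1 g' f')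
}.

Arguments Hom {K} a b : rename.
Arguments C2 {K a b} f g : rename.
Arguments id1 {K} a : rename.
Arguments comp1 {K a b c} g f : rename.
Arguments id2 {K a b} f : rename.
Arguments vcomp {K a b f g h} α β : rename.
Arguments hcomp {K a b c g g' f f'} α β : rename.

Notation "g ⊙ f" := (comp1 g f) (at level 40, left associativity).
Notation "α ∗ β" := (vcomp α β) (at level 45, right associativity).
Notation "α ⋆ β" := (hcomp α β) (at level 42, left associativity).

Definition castS {K : TwoCatData} {a b : Obj K} {f f' g : Hom a b}
  (e : f = f') (x : C2 f g) : C2 f' g :=
  match e in _ = y return C2 y g with eq_refl => x end.
Definition castT {K : TwoCatData} {a b : Obj K} {f g g' : Hom a b}
  (e : g = g') (x : C2 f g) : C2 f g' :=
  match e in _ = y return C2 f y with eq_refl => x end.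

Record TwoCatAx (K : TwoCatData) : Prop := {
  ax_comp1A : forall (a b c d : Obj K) (h : Hom c d) (g : Hom b c) (f : Hom a b),
      h ⊙ (g ⊙ f) = (h ⊙ g) ⊙ f;
  ax_comp1_idl : forall (a b : Obj K) (f : Hom a b), id1 b ⊙ f = f;
  ax_comp1_idr : forall (a b : Obj K) (f : Hom a b), f ⊙ id1 a = f;
  ax_vcompA : forall (a b : Obj K) (f g h i : Hom a b)
      (α : C2 h i) (β : C2 g h) (γ : C2 f g), α ∗ (β ∗ γ) = (α ∗ β) ∗ γ;
  ax_vcomp_idl : forall (a b : Obj K) (f g : Hom a b) (α : C2 f g), id2 g ∗ α = α;
  ax_vcomp_idr : forall (a b : Obj K) (f g : Hom a b) (α : C2 f g), α ∗ id2 f = α;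
  ax_hcomp_id2 : forall (a b c : Obj K) (g : Hom b c) (f : Hom a b),
      id2 g ⋆ id2 f = id2 (g ⊙ f);
  ax_interchange : forall (a b c : Obj K) (g g' g'' : Hom b c) (f f' f'' : Hom a b)
      (α : C2 g' g'') (β : C2 g g') (γ : C2 f' f'') (δ : C2 f f'),
      (α ∗ β) ⋆ (γ ∗ δ) = (α ⋆ γ) ∗ (β ⋆ δ);
  ax_hcompA : forall (a b c d : Obj K) (h h' : Hom c d) (g g' : Hom b c) (f f' : Hom a b)
      (α : C2 h h') (β : C2 g g') (γ : C2 f f'),
      castS (ax_comp1A h g f) (castT (ax_comp1A h' g' f') (α ⋆ (β ⋆ γ))) = (α ⋆ β) ⋆ γ;
  ax_hcomp_idl : forall (a b : Obj K) (f f' : Hom a b) (α : C2 f f'),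
      castS (ax_comp1_idl f) (castT (ax_comp1_idl f') (id2 (id1 b) ⋆ α)) = α;
  ax_hcomp_idr : forall (a b : Obj K) (f f' : Hom a b) (α : C2 f f'),
      castS (ax_comp1_idr f) (castT (ax_comp1_idr f') (α ⋆ id2 (id1 a))) = α
}.

Record TwoCat := { tc_data :> TwoCatData; tc_ax : TwoCatAx tc_data }.

Section TwoCatFacts.
Variable K : TwoCat.
Definition comp1A {a b c d : Obj K} (h : Hom c d) (g : Hom b c) (f : Hom a b) :
  h ⊙ (g ⊙ f) = (h ⊙ g) ⊙ f := ax_comp1A (tc_ax K) h g f.
Definition comp1_idl {a b : Obj K} (f : Hom a b) : id1 b ⊙ f = f :=
  ax_comp1_idl (tc_ax K) f.
Definition comp1_idr {a b : Obj K} (f : Hom a b) : f ⊙ id1 a = f :=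
  ax_comp1_idr (tc_ax K) f.
End TwoCatFacts.

(* whiskering: X α  and  α X *)
Definition wl {K : TwoCatData} {a b c : Obj K} (X : Hom b c) {f f' : Hom a b}
  (α : C2 f f') : C2 (X ⊙ f) (X ⊙ f') := id2 X ⋆ α.
Definition wr {K : TwoCatData} {a b c : Obj K} {g g' : Hom b c}
  (α : C2 g g') (X : Hom a b) : C2 (g ⊙ X) (g' ⊙ X) := α ⋆ id2 X.

Record Monad (K : TwoCat) := {
  mk : Obj K;
  mt : Hom mk mk;
  mmu : C2 (mt ⊙ mt) mt;
  meta : C2 (id1 mk) mt;
  m_assoc : mmu ∗ wr mmu mt = castS (comp1A mt mt mt) (mmu ∗ wl mt mmu);
  m_unitl : castS (comp1_idl mt) (mmu ∗ wr meta mt) = id2 mt;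
  m_unitr : castS (comp1_idr mt) (mmu ∗ wl mt meta) = id2 mt
}.
Arguments mk {K} m.
Arguments mt {K} m.
Arguments mmu {K} m.
Arguments meta {K} m.

Section EMw.
Variable K : TwoCat.

(* the type of the 2-cell psi of a candidate 1-cell (V,psi) : T -> T' *)
Definition Psi (T T' : Monad K) (V : Hom (mk T) (mk T')) : Type :=
  C2 (mt T' ⊙ V) (V ⊙ mt T).
Arguments Psi : clear implicits.

Definition castPsi (T T' : Monad K) {V V' : Hom (mk T) (mk T')} (e : V = V')
  (ψ : Psi T T' V) : Psi T T' V' :=
  match e in _ = y return Psi T T' y with eq_refl => ψ end.

Section TwoMonads.
Variables T T' : Monad K.
Local Notation t := (mt T).
Local Notation t' := (mt T').
Local Notation mu := (mmu T).
Local Notation mu' := (mmu T').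
Local Notation eta' := (meta T').

(* 1-cells of EM^w(K):  V mu * psi t * t' psi = psi * mu' V *)
Definition emw1 (V : Hom (mk T) (mk T')) (ψ : Psi T T' V) : Prop :=
  wl V mu ∗ castT (eq_sym (comp1A V t t)) (wr ψ t ∗ castT (comp1A t' V t) (wl t' ψ))
  = castS (eq_sym (comp1A t' t' V)) (ψ ∗ wr mu' V).

(* 2-cells rho : (V,psi) => (W,phi) of EM^w(K):
     W mu * rho t * psi = W mu * phi t * t' rho
     rho = W mu * phi t * eta' W t * rho                               *)
Definition emw2 {V W : Hom (mk T) (mk T')} (ψ : Psi T T' V) (φ : Psi T T' W)
  (ρ : C2 V (W ⊙ t)) : Prop :=
  wl W mu ∗ castT (eq_sym (comp1A W t t)) (wr ρ t ∗ ψ)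
  = wl W mu ∗ castT (eq_sym (comp1A W t t)) (wr φ t ∗ castT (comp1A t' W t) (wl t' ρ))
  /\
  ρ = wl W mu ∗ castT (eq_sym (comp1A W t t))
        (wr φ t ∗ castT (comp1A t' W t)
           (castS (comp1_idl (W ⊙ t)) (wr eta' (W ⊙ t)) ∗ ρ)).

Definition emw_id2 {W : Hom (mk T) (mk T')} (φ : Psi T T' W) : C2 W (W ⊙ t) :=
  φ ∗ castS (comp1_idl W) (wr eta' W).

Definition emw_vcomp {V W U : Hom (mk T) (mk T')}
  (τ : C2 W (U ⊙ t)) (ρ : C2 V (W ⊙ t)) : C2 V (U ⊙ t) :=
  wl U mu ∗ castT (eq_sym (comp1A U t t)) (wr τ t ∗ ρ).

Definition mndI {V W : Hom (mk T) (mk T')} (ψ : Psi T T' V) (φ : Psi T T' W)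
  (ω : C2 V W) : Prop :=
  wr ω t ∗ ψ
  = wl W mu ∗ castT (eq_sym (comp1A W t t))
      (wr φ t ∗ castT (comp1A t' W t)
         (wl t' (wr ω t) ∗ (wl t' ψ ∗ wl t' (castS (comp1_idl V) (wr eta' V))))).

Definition GI {V W : Hom (mk T) (mk T')} (ψ : Psi T T' V) (ω : C2 V W) : C2 V (W ⊙ t) :=
  wr ω t ∗ (ψ ∗ castS (comp1_idl V) (wr eta' V)).

Definition mndP {V W : Hom (mk T) (mk T')} (ψ : Psi T T' V) (φ : Psi T T' W)
  (ω : C2 V W) : Prop :=
  φ ∗ wl t' ω
  = wl W mu ∗ castT (eq_sym (comp1A W t t))
      (wr φ t ∗ castT (comp1A t' W t)
         (castS (comp1_idl (W ⊙ t)) (wr eta' (W ⊙ t)) ∗ (wr ω t ∗ ψ))).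

Definition GP {V W : Hom (mk T) (mk T')} (φ : Psi T T' W) (ω : C2 V W) : C2 V (W ⊙ t) :=
  φ ∗ (castS (comp1_idl W) (wr eta' W) ∗ ω).

End TwoMonads.

Definition id_psi (T : Monad K) : Psi T T (id1 (mk T)) :=
  castS (eq_sym (comp1_idr (mt T))) (castT (eq_sym (comp1_idl (mt T))) (id2 (mt T))).

Section ThreeMonads.
Variables T T' T'' : Monad K.
Local Notation t := (mt T).
Local Notation t' := (mt T').
Local Notation t'' := (mt T'').
Local Notation mu := (mmu T).

(* horizontal composite of 1-cells (V,psi) : T -> T' and (V',psi') : T' -> T'':
   (V'V, V' psi * psi' V) *)
Definition comp_psi {V : Hom (mk T) (mk T')} {V' : Hom (mk T') (mk T'')}
  (ψ' : Psi T' T'' V') (ψ : Psi T T' V) : Psi T T'' (V' ⊙ V) :=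
  castT (comp1A V' V t)
    (wl V' ψ ∗ castT (eq_sym (comp1A V' t' V))
                  (castS (eq_sym (comp1A t'' V' V)) (wr ψ' V))).

(* horizontal composite in EM^w(K) of rho : (V,psi) => (W,phi) (T -> T') and
   rho' : (V',psi') => (W',phi') (T' -> T''):  W'W mu * W' rho t * W' psi * rho' V *)
Definition emw_hcomp {V W : Hom (mk T) (mk T')} {V' W' : Hom (mk T') (mk T'')}
  (ψ : Psi T T' V) (ρ' : C2 V' (W' ⊙ t')) (ρ : C2 V (W ⊙ t)) : C2 (V' ⊙ V) ((W' ⊙ W) ⊙ t) :=
  wl (W' ⊙ W) mu ∗
    castT (eq_trans (f_equal (fun X => W' ⊙ X) (eq_sym (comp1A W t t))) (comp1A W' W (t ⊙ t)))
      (wl W' (wr ρ t) ∗ (wl W' ψ ∗ castT (eq_sym (comp1A W' t' V)) (wr ρ' V))).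

End ThreeMonads.
End EMw.

Arguments emw1 {K} T T' V ψ.
Arguments emw2 {K T T' V W} ψ φ ρ.
Arguments emw_id2 {K T T' W} φ.
Arguments emw_vcomp {K T T' V W U} τ ρ.
Arguments mndI {K T T' V W} ψ φ ω.
Arguments GI {K T T' V W} ψ ω.
Arguments mndP {K T T' V W} ψ φ ω.
Arguments GP {K T T' V W} φ ω.
Arguments id_psi {K} T.
Arguments comp_psi {K T T' T'' V V'} ψ' ψ.
Arguments emw_hcomp {K T T' T'' V W V' W'} ψ ρ' ρ.
Arguments castPsi {K T T' V V'} e ψ.
Arguments Psi {K} T T' V.

From Stdlib Require Import ClassicalEpsilon Eqdep.

(** All the identities are equalities between pasting composites of whiskered
    generators ([μ], [η], the distributive laws [ψ], [φ] and the cells [ω]),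
    proved by string-diagram chases: one rewrites with the monad laws, the
    axiom of an EM^w 1-cell and the defining equation of the 2-cells involved,
    and slides independent generators past each other by interchange.  The
    chases are run on 2-cells packed together with their boundary, where the
    transports along associativity and unit equations of 1-cells disappear, and
    every composite is normalised to a vertical chain of layers [L x R], a
    generator [x] whiskered on both sides. *)

(* [None] is the junk value of a vertical composite of non-composable cells;
   it makes vertical composition total, so its laws hold unconditionally. *)
Definition cell {K : TwoCat} (a b : Obj K) :=
  {p : Hom a b * Hom a b & option (C2 (fst p) (snd p))}.

Section PackedCells.
Context {K : TwoCat}.

Definition src {a b : Obj K} (X : cell a b) : Hom a b := fst (projT1 X).
Definition tgt {a b : Obj K} (X : cell a b) : Hom a b := snd (projT1 X).
Definition pack {a b : Obj K} {f g : Hom a b} (x : C2 f g) : cell a b :=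
  existT (fun p => option (C2 (fst p) (snd p))) (f, g) (Some x).
(* A copy of [pack], made opaque below, that marks the generators of normal
   forms, so that rewriting with [pack_layer] stops after one pass. *)
Definition atom {a b : Obj K} {f g : Hom a b} (x : C2 f g) : cell a b := pack x.
Definition idc {a b : Obj K} (f : Hom a b) : cell a b := pack (id2 f).

Definition vc {a b : Obj K} (X Y : cell a b) : cell a b :=
  existT (fun p => option (C2 (fst p) (snd p))) (src Y, tgt X)
    (match projT2 X, projT2 Y with
     | Some x, Some y =>
         match excluded_middle_informative (tgt Y = src X) with
         | left e => Some (x ∗ castT e y)
         | right _ => None
         end
     | _, _ => None
     end).

Definition hc {a b c : Obj K} (X : cell b c) (Y : cell a b) : cell a c :=
  existT (fun p => option (C2 (fst p) (snd p))) (src X ⊙ src Y, tgt X ⊙ tgt Y)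
    (match projT2 X, projT2 Y with
     | Some x, Some y => Some (x ⋆ y)
     | _, _ => None
     end).

Definition layer {a b c d : Obj K} (L : Hom c d) (G : cell b c) (R : Hom a b) :
  cell a d := hc (idc L) (hc G (idc R)).

Lemma pack_inj {a b : Obj K} {f g : Hom a b} (x y : C2 f g) : pack x = pack y -> x = y.
Proof. unfold pack. intro H. apply inj_pair2 in H. congruence. Qed.

Lemma pack_vcomp {a b : Obj K} {f g h : Hom a b} (x : C2 g h) (y : C2 f g) :
  pack (x ∗ y) = vc (pack x) (pack y).
Proof.
  unfold vc, pack; cbn. destruct (excluded_middle_informative (g = g)) as [e|n].
  - rewrite (UIP_refl _ _ e). reflexivity.
  - contradiction n; reflexivity.
Qed.

Lemma pack_hcomp {a b c : Obj K} {g g' : Hom b c} {f f' : Hom a b}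
  (x : C2 g g') (y : C2 f f') : pack (x ⋆ y) = hc (pack x) (pack y).
Proof. reflexivity. Qed.

Lemma pack_id2 {a b : Obj K} (f : Hom a b) : pack (id2 f) = idc f.
Proof. reflexivity. Qed.

Lemma pack_castS {a b : Obj K} {f f' g : Hom a b} (e : f = f') (x : C2 f g) :
  pack (castS e x) = pack x.
Proof. destruct e; reflexivity. Qed.

Lemma pack_castT {a b : Obj K} {f g g' : Hom a b} (e : g = g') (x : C2 f g) :
  pack (castT e x) = pack x.
Proof. destruct e; reflexivity. Qed.

Lemma pack_castPsi (T T' : Monad K) (V V' : Hom (mk T) (mk T')) (e : V = V')
  (x : Psi T T' V) : @pack _ _ (mt T' ⊙ V') (V' ⊙ mt T) (castPsi e x) = pack x.
Proof. destruct e; reflexivity. Qed.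

Lemma junk_eq {a b : Obj K} (f f' g g' : Hom a b) :
  f = f' -> g = g' ->
  existT (fun p => option (C2 (fst p) (snd p))) (f, g) None =
  existT (fun p => option (C2 (fst p) (snd p))) (f', g') None.
Proof. intros; subst; reflexivity. Qed.

Lemma hc_idl {a b : Obj K} (X : cell a b) : hc (idc (id1 b)) X = X.
Proof.
  destruct X as [[f g] [x|]]; cbn.
  - change (pack (id2 (id1 b) ⋆ x) = pack x).
    rewrite <- (ax_hcomp_idl (tc_ax K) x) at 2. rewrite pack_castS, pack_castT. reflexivity.
  - apply junk_eq; apply (ax_comp1_idl (tc_ax K)).
Qed.

Lemma hc_idr {a b : Obj K} (X : cell a b) : hc X (idc (id1 a)) = X.
Proof.
  destruct X as [[f g] [x|]]; cbn.
  - change (pack (x ⋆ id2 (id1 a)) = pack x).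
    rewrite <- (ax_hcomp_idr (tc_ax K) x) at 2. rewrite pack_castS, pack_castT. reflexivity.
  - apply junk_eq; apply (ax_comp1_idr (tc_ax K)).
Qed.

Lemma hcA {a b c d : Obj K} (X : cell c d) (Y : cell b c) (Z : cell a b) :
  hc (hc X Y) Z = hc X (hc Y Z).
Proof.
  destruct X as [[f g] [x|]]; destruct Y as [[f1 g1] [y|]]; destruct Z as [[f2 g2] [z|]];
    cbn; try (apply junk_eq; symmetry; apply (ax_comp1A (tc_ax K))).
  change (pack ((x ⋆ y) ⋆ z) = pack (x ⋆ (y ⋆ z))).
  rewrite <- (ax_hcompA (tc_ax K) x y z), pack_castS, pack_castT. reflexivity.
Qed.

Lemma hc_idc {a b c : Obj K} (g : Hom b c) (f : Hom a b) :
  hc (idc g) (idc f) = idc (g ⊙ f).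
Proof. unfold idc. rewrite <- pack_hcomp. f_equal. apply (ax_hcomp_id2 (tc_ax K)). Qed.

Ltac case_eq_dec := repeat match goal with
  |- context [excluded_middle_informative ?P] => destruct (excluded_middle_informative P)
  end.

Lemma vcA {a b : Obj K} (X Y Z : cell a b) : vc (vc X Y) Z = vc X (vc Y Z).
Proof.
  destruct X as [[f g] [x|]]; destruct Y as [[f1 g1] [y|]]; destruct Z as [[f2 g2] [z|]];
    unfold vc; cbn; try reflexivity; case_eq_dec; try reflexivity; subst; cbn;
    try reflexivity.
  f_equal. f_equal. symmetry; apply (ax_vcompA (tc_ax K)).
Qed.

Lemma vc_idl {a b : Obj K} (g : Hom a b) (X : cell a b) : tgt X = g -> vc (idc g) X = X.
Proof.
  destruct X as [[f g'] [x|]]; unfold tgt; cbn; intro; subst; unfold vc; cbn; case_eq_dec;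
    try reflexivity.
  - rewrite (UIP_refl _ _ e); cbn. f_equal. f_equal. apply (ax_vcomp_idl (tc_ax K)).
  - contradiction n; reflexivity.
Qed.

Lemma vc_idr {a b : Obj K} (f : Hom a b) (X : cell a b) : src X = f -> vc X (idc f) = X.
Proof.
  destruct X as [[f' g] [x|]]; unfold src; cbn; intro; subst; unfold vc; cbn; case_eq_dec;
    try reflexivity.
  - rewrite (UIP_refl _ _ e); cbn. f_equal. f_equal. apply (ax_vcomp_idr (tc_ax K)).
  - contradiction n; reflexivity.
Qed.

Lemma interchange {a b c : Obj K} (A B : cell b c) (C D : cell a b) :
  tgt B = src A -> tgt D = src C -> hc (vc A B) (vc C D) = vc (hc A C) (hc B D).
Proof.
  destruct A as [[fa ga] [xa|]]; destruct B as [[fb gb] [xb|]];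
    destruct C as [[fc gc] [xc|]]; destruct D as [[fd gd] [xd|]];
    unfold src, tgt; cbn; intros; subst; unfold vc, hc; cbn; case_eq_dec; cbn;
    try reflexivity; try (exfalso; auto; fail).
  rewrite (UIP_refl _ _ e), (UIP_refl _ _ e0), (UIP_refl _ _ e1); cbn.
  f_equal. f_equal. apply (ax_interchange (tc_ax K)).
Qed.

Lemma hc_right_first {a b c : Obj K} (A : cell b c) (B : cell a b) :
  hc A B = vc (hc A (idc (tgt B))) (hc (idc (src A)) B).
Proof.
  destruct A as [[fa ga] [xa|]]; destruct B as [[fb gb] [xb|]];
    unfold src, tgt, vc, hc; cbn; case_eq_dec; cbn; try reflexivity;
    try (exfalso; auto; fail).
  rewrite (UIP_refl _ _ e); cbn. f_equal. f_equal.
  rewrite <- (ax_interchange (tc_ax K)), (ax_vcomp_idl (tc_ax K)), (ax_vcomp_idr (tc_ax K)).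
  reflexivity.
Qed.

Lemma hc_left_first {a b c : Obj K} (A : cell b c) (B : cell a b) :
  hc A B = vc (hc (idc (tgt A)) B) (hc A (idc (src B))).
Proof.
  destruct A as [[fa ga] [xa|]]; destruct B as [[fb gb] [xb|]];
    unfold src, tgt, vc, hc; cbn; case_eq_dec; cbn; try reflexivity;
    try (exfalso; auto; fail).
  rewrite (UIP_refl _ _ e); cbn. f_equal. f_equal.
  rewrite <- (ax_interchange (tc_ax K)), (ax_vcomp_idl (tc_ax K)), (ax_vcomp_idr (tc_ax K)).
  reflexivity.
Qed.

Lemma pack_layer {a b : Obj K} {f g : Hom a b} (x : C2 f g) :
  pack x = layer (id1 b) (atom x) (id1 a).
Proof. unfold layer. rewrite hc_idl, hc_idr. reflexivity. Qed.

Lemma hc_idc_layer {a b c d e : Obj K} (X : Hom d e) (L : Hom c d) (G : cell b c)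
  (R : Hom a b) : hc (idc X) (layer L G R) = layer (X ⊙ L) G R.
Proof. unfold layer. rewrite <- hcA, hc_idc. reflexivity. Qed.

Lemma hc_layer_idc {a0 a b c d : Obj K} (L : Hom c d) (G : cell b c) (R : Hom a b)
  (X : Hom a0 a) : hc (layer L G R) (idc X) = layer L G (R ⊙ X).
Proof. unfold layer. rewrite !hcA, hc_idc. reflexivity. Qed.

Lemma hc_idc_vc {a b c : Obj K} (X : Hom b c) (A B : cell a b) :
  tgt B = src A -> hc (idc X) (vc A B) = vc (hc (idc X) A) (hc (idc X) B).
Proof.
  intro H. rewrite <- (vc_idl X (idc X) eq_refl) at 1. apply interchange; auto.
Qed.

Lemma hc_vc_idc {a b c : Obj K} (A B : cell b c) (X : Hom a b) :
  tgt B = src A -> hc (vc A B) (idc X) = vc (hc A (idc X)) (hc B (idc X)).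
Proof.
  intro H. rewrite <- (vc_idl X (idc X) eq_refl) at 1. apply interchange; auto.
Qed.

Lemma hc_layer_layer {a b c d e f0 g0 : Obj K}
  (L : Hom f0 g0) {f g : Hom e f0} (x : C2 f g) (R : Hom d e)
  (L' : Hom c d) {f' g' : Hom b c} (x' : C2 f' g') (R' : Hom a b) :
  hc (layer L (atom x) R) (layer L' (atom x') R') =
  vc (layer L (atom x) (R ⊙ (L' ⊙ (g' ⊙ R')))) (layer ((L ⊙ (f ⊙ R)) ⊙ L') (atom x') R').
Proof. rewrite hc_right_first. apply (f_equal2 vc); [apply hc_layer_idc | apply hc_idc_layer]. Qed.

Lemma layer_exchange {a b c d e f0 : Obj K}
  (L1 : Hom e f0) {f1 g1 : Hom d e} (x1 : C2 f1 g1) (M : Hom c d)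
  {f2 g2 : Hom b c} (x2 : C2 f2 g2) (R2 : Hom a b) :
  vc (layer L1 (atom x1) (M ⊙ (id1 c ⊙ (g2 ⊙ R2))))
     (layer ((L1 ⊙ (f1 ⊙ M)) ⊙ id1 c) (atom x2) R2)
  = vc (layer ((L1 ⊙ (g1 ⊙ M)) ⊙ id1 c) (atom x2) R2)
       (layer L1 (atom x1) (M ⊙ (id1 c ⊙ (f2 ⊙ R2)))).
Proof.
  rewrite <- hc_layer_layer, hc_left_first.
  apply (f_equal2 vc); [apply hc_idc_layer | apply hc_layer_idc].
Qed.

Lemma layer_exchange_eq {a b c d e f0 : Obj K}
  (L1 : Hom e f0) {f1 g1 : Hom d e} (x1 : C2 f1 g1) (M : Hom c d)
  {f2 g2 : Hom b c} (x2 : C2 f2 g2) (R2 : Hom a b) R1 L2 L2' R1' :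
  R1 = M ⊙ (id1 c ⊙ (g2 ⊙ R2)) -> L2 = (L1 ⊙ (f1 ⊙ M)) ⊙ id1 c ->
  L2' = (L1 ⊙ (g1 ⊙ M)) ⊙ id1 c -> R1' = M ⊙ (id1 c ⊙ (f2 ⊙ R2)) ->
  vc (layer L1 (atom x1) R1) (layer L2 (atom x2) R2)
  = vc (layer L2' (atom x2) R2) (layer L1 (atom x1) R1').
Proof. intros; subst; apply layer_exchange. Qed.

Lemma src_vc {a b : Obj K} (X Y : cell a b) : src (vc X Y) = src Y. Proof. reflexivity. Qed.
Lemma tgt_vc {a b : Obj K} (X Y : cell a b) : tgt (vc X Y) = tgt X. Proof. reflexivity. Qed.
Lemma src_idc {a b : Obj K} (f : Hom a b) : src (idc f) = f. Proof. reflexivity. Qed.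
Lemma tgt_idc {a b : Obj K} (f : Hom a b) : tgt (idc f) = f. Proof. reflexivity. Qed.
Lemma src_hc {a b c : Obj K} (X : cell b c) (Y : cell a b) :
  src (hc X Y) = src X ⊙ src Y. Proof. reflexivity. Qed.
Lemma tgt_hc {a b c : Obj K} (X : cell b c) (Y : cell a b) :
  tgt (hc X Y) = tgt X ⊙ tgt Y. Proof. reflexivity. Qed.
Lemma src_atom {a b : Obj K} {f g : Hom a b} (x : C2 f g) : src (atom x) = f.
Proof. reflexivity. Qed.
Lemma tgt_atom {a b : Obj K} {f g : Hom a b} (x : C2 f g) : tgt (atom x) = g.
Proof. reflexivity. Qed.
Lemma src_layer {a b c d : Obj K} (L : Hom c d) (G : cell b c) (R : Hom a b) :
  src (layer L G R) = L ⊙ (src G ⊙ R). Proof. reflexivity. Qed.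
Lemma tgt_layer {a b c d : Obj K} (L : Hom c d) (G : cell b c) (R : Hom a b) :
  tgt (layer L G R) = L ⊙ (tgt G ⊙ R). Proof. reflexivity. Qed.

End PackedCells.

Global Opaque pack atom idc layer vc hc src tgt.

Ltac norm1 := repeat (rewrite comp1A || rewrite comp1_idl || rewrite comp1_idr).

Ltac boundary :=
  repeat (rewrite src_vc || rewrite tgt_vc || rewrite src_hc || rewrite tgt_hc ||
          rewrite src_idc || rewrite tgt_idc || rewrite src_atom || rewrite tgt_atom ||
          rewrite src_layer || rewrite tgt_layer);
  norm1; reflexivity.

Ltac unfold_cells := unfold emw1, emw2, emw_id2, emw_vcomp, mndI, GI, mndP, GP, id_psi,
  comp_psi, emw_hcomp, wl, wr in *.

Ltac to_layers :=
  repeat (rewrite pack_vcomp || rewrite pack_hcomp || rewrite pack_id2 ||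
          rewrite pack_castS || rewrite pack_castT ||
          match goal with |- context [pack (castPsi _ _)] => rewrite pack_castPsi end);
  repeat match goal with |- context [@pack _ _ _ _ _ ?x] => rewrite (pack_layer x) end.

Ltac to_layers_in H :=
  repeat (rewrite pack_vcomp in H || rewrite pack_hcomp in H || rewrite pack_id2 in H ||
          rewrite pack_castS in H || rewrite pack_castT in H ||
          match type of H with context [pack (castPsi _ _)] => rewrite pack_castPsi in H end);
  repeat match type of H with context [@pack _ _ _ _ _ ?x] => rewrite (pack_layer x) in H end.

Ltac layer_norm := repeat first [
  rewrite hc_idc_layer | rewrite hc_layer_idc | rewrite hc_idc | rewrite hc_layer_layer |
  rewrite hc_idc_vc by boundary | rewrite hc_vc_idc by boundary | rewrite vcA |
  rewrite vc_idl by boundary | rewrite vc_idr by boundary |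
  rewrite comp1A | rewrite comp1_idl | rewrite comp1_idr ].

Ltac layer_norm_in H := repeat first [
  rewrite hc_idc_layer in H | rewrite hc_layer_idc in H | rewrite hc_idc in H |
  rewrite hc_layer_layer in H |
  rewrite hc_idc_vc in H by boundary | rewrite hc_vc_idc in H by boundary |
  rewrite vcA in H | rewrite vc_idl in H by boundary | rewrite vc_idr in H by boundary |
  rewrite comp1A in H | rewrite comp1_idl in H | rewrite comp1_idr in H ].

Ltac chase_start := unfold_cells; apply pack_inj; to_layers; layer_norm.

Ltac pack_hyp H := apply (f_equal pack) in H; unfold_cells; to_layers_in H; layer_norm_in H.

Ltac pack_law H law := pose proof law as H; pack_hyp H.

Ltac tail_at n t := lazymatch n with
  | O => constr:(t)
  | S ?m => lazymatch t with vc _ ?r => tail_at m r end end.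

Ltac replace_tail sub new tac :=
  lazymatch goal with |- ?lhs = ?rhs =>
  let E := fresh "E" in assert (E : sub = new) by tac;
  lazymatch lhs with context C [sub] => let lhs' := context C [new] in
    transitivity lhs'; [rewrite E; reflexivity | clear E; layer_norm] end end.

(* [rw_at i n H L R] rewrites with [L H R] the [n] consecutive layers of the
   left-hand side starting at position [i], position 0 being the last one
   applied. *)
Ltac rw_at i n H L R :=
  lazymatch goal with |- ?lhs = ?rhs =>
  let sub := tail_at i lhs in
  lazymatch type of H with ?X = ?Y =>
  let new := match constr:(tt) with
     | _ => let rest := tail_at n sub in constr:(vc (hc (idc L) (hc Y (idc R))) rest)
     | _ => constr:(hc (idc L) (hc Y (idc R))) end in
  let old := match constr:(tt) with
     | _ => let rest := tail_at n sub in constr:(vc (hc (idc L) (hc X (idc R))) rest)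
     | _ => constr:(hc (idc L) (hc X (idc R))) end in
  replace_tail sub new
    ltac:(transitivity old; [layer_norm; reflexivity | rewrite H; reflexivity])
  end end.

Ltac rw_at0 i n H :=
  lazymatch type of H with @eq (@cell _ ?a ?b) _ _ => rw_at i n H (id1 b) (id1 a) end.
Ltac rw_at_l i n H L :=
  lazymatch type of H with @eq (@cell _ ?a ?b) _ _ => rw_at i n H L (id1 a) end.
Ltac rw_at_r i n H R :=
  lazymatch type of H with @eq (@cell _ ?a ?b) _ _ => rw_at i n H (id1 b) R end.

(* [exch_at i M] and [exch_at' i M] exchange the layers at positions [i] and
   [i+1], whose generators are separated horizontally by the 1-cell [M]; in
   [exch_at] the generator of layer [i] lies to the left, in [exch_at'] to the
   right. *)
Ltac exch_at i M :=
  lazymatch goal with |- ?lhs = ?rhs =>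
  let sub := tail_at i lhs in
  lazymatch type of M with @Hom _ ?c _ =>
  lazymatch sub with
  | vc (layer ?L1 (@atom _ _ _ ?f1 ?g1 ?x1) ?R1)
       (vc (layer ?L2 (@atom _ _ _ ?f2 ?g2 ?x2) ?R2) ?r) =>
    let L2' := constr:((L1 ⊙ (g1 ⊙ M)) ⊙ id1 c) in
    let R1' := constr:(M ⊙ (id1 c ⊙ (f2 ⊙ R2))) in
    replace_tail sub (vc (layer L2' (atom x2) R2) (vc (layer L1 (atom x1) R1') r))
      ltac:(rewrite <- !vcA;
            rewrite (layer_exchange_eq L1 x1 M x2 R2 R1 L2 L2' R1') by boundary;
            reflexivity)
  | vc (layer ?L1 (@atom _ _ _ ?f1 ?g1 ?x1) ?R1) (layer ?L2 (@atom _ _ _ ?f2 ?g2 ?x2) ?R2) =>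
    let L2' := constr:((L1 ⊙ (g1 ⊙ M)) ⊙ id1 c) in
    let R1' := constr:(M ⊙ (id1 c ⊙ (f2 ⊙ R2))) in
    replace_tail sub (vc (layer L2' (atom x2) R2) (layer L1 (atom x1) R1'))
      ltac:(apply (layer_exchange_eq L1 x1 M x2 R2 R1 L2 L2' R1'); boundary)
  end end end.

Ltac exch_at' i M :=
  lazymatch goal with |- ?lhs = ?rhs =>
  let sub := tail_at i lhs in
  lazymatch type of M with @Hom _ ?c _ =>
  lazymatch sub with
  | vc (layer ?L1 (@atom _ _ _ ?f1 ?g1 ?x1) ?R1)
       (vc (layer ?L2 (@atom _ _ _ ?f2 ?g2 ?x2) ?R2) ?r) =>
    let R2' := constr:(M ⊙ (id1 c ⊙ (g1 ⊙ R1))) in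
    let L1' := constr:((L2 ⊙ (f2 ⊙ M)) ⊙ id1 c) in
    replace_tail sub (vc (layer L2 (atom x2) R2') (vc (layer L1' (atom x1) R1) r))
      ltac:(rewrite <- !vcA;
            rewrite <- (layer_exchange_eq L2 x2 M x1 R1 R2' L1' L1 R2) by boundary;
            reflexivity)
  | vc (layer ?L1 (@atom _ _ _ ?f1 ?g1 ?x1) ?R1) (layer ?L2 (@atom _ _ _ ?f2 ?g2 ?x2) ?R2) =>
    let R2' := constr:(M ⊙ (id1 c ⊙ (g1 ⊙ R1))) in
    let L1' := constr:((L2 ⊙ (f2 ⊙ M)) ⊙ id1 c) in
    replace_tail sub (vc (layer L2 (atom x2) R2') (layer L1' (atom x1) R1))
      ltac:(symmetry; apply (layer_exchange_eq L2 x2 M x1 R1 R2' L1' L1 R2); boundary)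
  end end end.

Section OneCells.
Context {K : TwoCat} {T T' T'' T''' : Monad K}.

Lemma emw1_id : emw1 T T (id1 (mk T)) (id_psi T).
Proof. chase_start. reflexivity. Qed.

Lemma emw1_comp {V : Hom (mk T) (mk T')} {V' : Hom (mk T') (mk T'')}
  (ψ : Psi T T' V) (ψ' : Psi T' T'' V') :
  emw1 T T' V ψ -> emw1 T' T'' V' ψ' -> emw1 T T'' (V' ⊙ V) (comp_psi ψ' ψ).
Proof.
  intros Eψ Eψ'. pack_hyp Eψ. pack_hyp Eψ'. chase_start.
  exch_at 2 (id1 (mk T')).
  rw_at 0 3 Eψ V' (id1 (mk T)). rw_at 1 3 Eψ' (id1 (mk T'')) V.
  reflexivity.
Qed.

Lemma comp_psiA {V : Hom (mk T) (mk T')} {V' : Hom (mk T') (mk T'')}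
  {V'' : Hom (mk T'') (mk T''')} (ψ : Psi T T' V) (ψ' : Psi T' T'' V')
  (ψ'' : Psi T'' T''' V'') :
  castPsi (comp1A V'' V' V) (comp_psi ψ'' (comp_psi ψ' ψ)) = comp_psi (comp_psi ψ'' ψ') ψ.
Proof. chase_start. reflexivity. Qed.

Lemma comp_psi_idr {V : Hom (mk T) (mk T')} (ψ : Psi T T' V) :
  castPsi (comp1_idr V) (comp_psi ψ (id_psi T)) = ψ.
Proof. chase_start. reflexivity. Qed.

Lemma comp_psi_idl {V : Hom (mk T) (mk T')} (ψ : Psi T T' V) :
  castPsi (comp1_idl V) (comp_psi (id_psi T') ψ) = ψ.
Proof. chase_start. reflexivity. Qed.

End OneCells.

Section MndIota.
Context {K : TwoCat} {T T' T'' : Monad K}.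

Lemma mndI_id2 {V : Hom (mk T) (mk T')} (ψ : Psi T T' V) :
  emw1 T T' V ψ -> mndI ψ ψ (id2 V).
Proof.
  intro Eψ. pack_hyp Eψ. pack_law mUr' (m_unitr T'). chase_start.
  symmetry. rw_at0 0 3 Eψ. rw_at_r 1 2 mUr' V.
  reflexivity.
Qed.

Lemma mndI_vcomp {V W U : Hom (mk T) (mk T')}
  (ψ : Psi T T' V) (φ : Psi T T' W) (θ : Psi T T' U) (ω : C2 V W) (τ : C2 W U) :
  mndI ψ φ ω -> mndI φ θ τ -> mndI ψ θ (τ ∗ ω).
Proof.
  intros Hω Hτ. pack_hyp Hω. pack_hyp Hτ. pack_law mA (m_assoc T). chase_start.
  rw_at0 1 2 Hω. exch_at 0 (id1 (mk T)). rw_at_r 1 2 Hτ (mt T). rw_at_l 0 2 mA U.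
  exch_at' 1 (id1 (mk T)). exch_at' 2 (id1 (mk T)).
  exch_at 5 (id1 (mk T')). exch_at 6 (id1 (mk T')). exch_at 7 (id1 (mk T')).
  rw_at_l 3 5 (eq_sym Hω) (mt T').
  reflexivity.
Qed.

Lemma mndI_hcomp {V W : Hom (mk T) (mk T')} {V' W' : Hom (mk T') (mk T'')}
  (ψ : Psi T T' V) (φ : Psi T T' W) (ψ' : Psi T' T'' V') (φ' : Psi T' T'' W')
  (ω : C2 V W) (ω' : C2 V' W') :
  emw1 T T' W φ -> mndI ψ φ ω -> mndI ψ' φ' ω' ->
  mndI (comp_psi ψ' ψ) (comp_psi φ' φ) (ω' ⋆ ω).
Proof.
  intros Eφ Hω Hω'. pack_hyp Eφ. pack_hyp Hω. pack_hyp Hω'. pack_law mA (m_assoc T).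
  chase_start.
  exch_at 0 (id1 (mk T')). exch_at 1 (id1 (mk T')).
  rw_at_l 0 2 Hω W'. rw_at_r 5 2 Hω' V.
  exch_at' 4 (id1 (mk T')). exch_at' 3 (id1 (mk T')). exch_at' 2 (id1 (mk T')).
  rw_at 1 2 (eq_sym Eφ) W' (mt T). rw_at_l 0 2 mA (W' ⊙ W).
  exch_at' 1 (id1 (mk T)).
  rw_at_l 2 5 (eq_sym Hω) (W' ⊙ mt T').
  exch_at' 3 (id1 (mk T')). exch_at' 2 (id1 (mk T')).
  exch_at' 4 (id1 (mk T')). exch_at' 3 (id1 (mk T')).
  reflexivity.
Qed.

Lemma GI_emw2 {V W : Hom (mk T) (mk T')} (ψ : Psi T T' V) (φ : Psi T T' W) (ω : C2 V W) :
  emw1 T T' V ψ -> mndI ψ φ ω -> emw2 ψ φ (GI ψ ω).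
Proof.
  intros Eψ Hω. pack_hyp Eψ. pack_hyp Hω. pack_law mUl' (m_unitl T').
  unfold emw2. split; chase_start.
  - exch_at' 0 (id1 (mk T)). exch_at 3 (id1 (mk T')).
    rw_at0 1 3 Eψ. rw_at_r 2 2 mUl' V.
    symmetry. rw_at0 0 5 (eq_sym Hω).
    reflexivity.
  - symmetry. exch_at 2 (id1 (mk T')). exch_at 3 (id1 (mk T')). exch_at 4 (id1 (mk T')).
    rw_at0 0 5 (eq_sym Hω).
    reflexivity.
Qed.

Lemma GI_id2 {V : Hom (mk T) (mk T')} (ψ : Psi T T' V) : GI ψ (id2 V) = emw_id2 ψ.
Proof. chase_start. reflexivity. Qed.

Lemma GI_vcomp {V W U : Hom (mk T) (mk T')} (ψ : Psi T T' V) (φ : Psi T T' W)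
  (ω : C2 V W) (τ : C2 W U) :
  mndI ψ φ ω -> GI ψ (τ ∗ ω) = emw_vcomp (GI φ τ) (GI ψ ω).
Proof.
  intro Hω. pack_hyp Hω. chase_start.
  symmetry. exch_at' 0 (id1 (mk T)).
  exch_at 3 (id1 (mk T')). exch_at 4 (id1 (mk T')). exch_at 5 (id1 (mk T')).
  rw_at0 1 5 (eq_sym Hω).
  reflexivity.
Qed.

Lemma GI_hcomp {V W : Hom (mk T) (mk T')} {V' W' : Hom (mk T') (mk T'')}
  (ψ : Psi T T' V) (ψ' : Psi T' T'' V') (ω : C2 V W) (ω' : C2 V' W') :
  emw1 T T' V ψ -> GI (comp_psi ψ' ψ) (ω' ⋆ ω) = emw_hcomp ψ (GI ψ' ω') (GI ψ ω).
Proof.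
  intro Eψ. pack_hyp Eψ. pack_law mUl' (m_unitl T'). chase_start.
  symmetry. exch_at' 0 (id1 (mk T)). exch_at 3 (id1 (mk T')).
  rw_at_l 1 3 Eψ W'. rw_at 2 2 mUl' W' V.
  symmetry. exch_at 0 (id1 (mk T')). exch_at 1 (id1 (mk T')).
  reflexivity.
Qed.

End MndIota.

Section MndPi.
Context {K : TwoCat} {T T' T'' : Monad K}.

Lemma mndP_id2 {V : Hom (mk T) (mk T')} (ψ : Psi T T' V) :
  emw1 T T' V ψ -> mndP ψ ψ (id2 V).
Proof.
  intro Eψ. pack_hyp Eψ. pack_law mUl' (m_unitl T'). chase_start.
  symmetry. exch_at 2 (id1 (mk T')). rw_at0 0 3 Eψ. rw_at_r 1 2 mUl' V.
  reflexivity.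
Qed.

Lemma mndP_vcomp {V W U : Hom (mk T) (mk T')}
  (ψ : Psi T T' V) (φ : Psi T T' W) (θ : Psi T T' U) (ω : C2 V W) (τ : C2 W U) :
  mndP ψ φ ω -> mndP φ θ τ -> mndP ψ θ (τ ∗ ω).
Proof.
  intros Hω Hτ. pack_hyp Hω. pack_hyp Hτ. pack_law mA (m_assoc T). chase_start.
  rw_at0 0 2 Hτ. rw_at0 4 2 Hω.
  exch_at 3 (id1 (mk T)). exch_at 2 U. exch_at 1 (id1 (mk T)).
  rw_at_l 0 2 (eq_sym mA) U. rw_at_r 1 5 (eq_sym Hτ) (mt T).
  exch_at' 2 (id1 (mk T')).
  reflexivity.
Qed.

Lemma mndP_hcomp {V W : Hom (mk T) (mk T')} {V' W' : Hom (mk T') (mk T'')}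
  (ψ : Psi T T' V) (φ : Psi T T' W) (ψ' : Psi T' T'' V') (φ' : Psi T' T'' W')
  (ω : C2 V W) (ω' : C2 V' W') :
  emw1 T T' V ψ -> mndP ψ φ ω -> mndP ψ' φ' ω' ->
  mndP (comp_psi ψ' ψ) (comp_psi φ' φ) (ω' ⋆ ω).
Proof.
  intros Eψ Hω Hω'. pack_hyp Eψ. pack_hyp Hω. pack_hyp Hω'. pack_law mA (m_assoc T).
  chase_start.
  rw_at_r 1 2 Hω' W.
  exch_at 5 (id1 (mk T')). exch_at 4 (mt T'). exch_at 3 (W' ⊙ mt T').
  exch_at 2 (mt T'). exch_at 1 (id1 (mk T')).
  rw_at_l 0 2 Hω W'. rw_at_l 4 2 (eq_sym Eψ) W'.
  exch_at 3 (id1 (mk T)). exch_at 2 W. exch_at 1 (id1 (mk T)).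
  rw_at_l 0 2 (eq_sym mA) (W' ⊙ W).
  symmetry.
  exch_at 4 (id1 (mk T')). exch_at 3 W'. exch_at 2 (id1 (mk T')).
  rw_at 1 2 Hω W' (mt T).
  exch_at 8 (id1 (mk T')). exch_at 7 W'. exch_at 6 (id1 (mk T')).
  reflexivity.
Qed.

Lemma GP_emw2 {V W : Hom (mk T) (mk T')} (ψ : Psi T T' V) (φ : Psi T T' W) (ω : C2 V W) :
  emw1 T T' W φ -> mndP ψ φ ω -> emw2 ψ φ (GP φ ω).
Proof.
  intros Eφ Hω. pack_hyp Eφ. pack_hyp Hω.
  pack_law mUl' (m_unitl T'). pack_law mUr' (m_unitr T').
  unfold emw2. split; chase_start.
  - rw_at0 0 5 (eq_sym Hω). symmetry. rw_at0 0 3 Eφ. rw_at_r 1 2 mUr' W.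
    reflexivity.
  - symmetry. exch_at 2 (id1 (mk T')). rw_at0 0 3 Eφ. rw_at_r 1 2 mUl' W.
    reflexivity.
Qed.

Lemma GP_id2 {V : Hom (mk T) (mk T')} (ψ : Psi T T' V) : GP ψ (id2 V) = emw_id2 ψ.
Proof. chase_start. reflexivity. Qed.

Lemma GP_vcomp {V W U : Hom (mk T) (mk T')} (φ : Psi T T' W) (θ : Psi T T' U)
  (ω : C2 V W) (τ : C2 W U) :
  mndP φ θ τ -> GP θ (τ ∗ ω) = emw_vcomp (GP θ τ) (GP φ ω).
Proof.
  intro Hτ. pack_hyp Hτ. chase_start.
  symmetry. rw_at0 0 5 (eq_sym Hτ). exch_at' 1 (id1 (mk T')).
  reflexivity.
Qed.

Lemma GP_hcomp {V W : Hom (mk T) (mk T')} {V' W' : Hom (mk T') (mk T'')}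
  (ψ : Psi T T' V) (φ : Psi T T' W) (φ' : Psi T' T'' W') (ω : C2 V W) (ω' : C2 V' W') :
  mndP ψ φ ω -> GP (comp_psi φ' φ) (ω' ⋆ ω) = emw_hcomp ψ (GP φ' ω') (GP φ ω).
Proof.
  intro Hω. pack_hyp Hω. chase_start.
  exch_at 3 (id1 (mk T')). exch_at 2 W'. exch_at 1 (id1 (mk T')).
  rw_at_l 0 2 Hω W'.
  reflexivity.
Qed.

End MndPi.

Theorem corollary1p4 (K : TwoCat) :
  ( (forall T : Monad K, emw1 T T (id1 (mk T)) (id_psi T))
    /\ (forall (T T' T'' : Monad K) (V : Hom (mk T) (mk T')) (V' : Hom (mk T') (mk T''))
          (ψ : Psi T T' V) (ψ' : Psi T' T'' V'),
          emw1 T T' V ψ -> emw1 T' T'' V' ψ' -> emw1 T T'' (V' ⊙ V) (comp_psi ψ' ψ))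
    /\ (forall (T T' T'' T''' : Monad K) (V : Hom (mk T) (mk T'))
          (V' : Hom (mk T') (mk T'')) (V'' : Hom (mk T'') (mk T'''))
          (ψ : Psi T T' V) (ψ' : Psi T' T'' V') (ψ'' : Psi T'' T''' V''),
          emw1 T T' V ψ -> emw1 T' T'' V' ψ' -> emw1 T'' T''' V'' ψ'' ->
          castPsi (comp1A V'' V' V) (comp_psi ψ'' (comp_psi ψ' ψ))
          = comp_psi (comp_psi ψ'' ψ') ψ)
    /\ (forall (T T' : Monad K) (V : Hom (mk T) (mk T')) (ψ : Psi T T' V),
          emw1 T T' V ψ ->
          castPsi (comp1_idr V) (comp_psi ψ (id_psi T)) = ψ
          /\ castPsi (comp1_idl V) (comp_psi (id_psi T') ψ) = ψ) )
  /\
  ( ( (forall (T T' : Monad K) (V : Hom (mk T) (mk T')) (ψ : Psi T T' V),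
          emw1 T T' V ψ -> mndI ψ ψ (id2 V))
      /\ (forall (T T' : Monad K) (V W U : Hom (mk T) (mk T'))
            (ψ : Psi T T' V) (φ : Psi T T' W) (θ : Psi T T' U) (ω : C2 V W) (τ : C2 W U),
            emw1 T T' V ψ -> emw1 T T' W φ -> emw1 T T' U θ ->
            mndI ψ φ ω -> mndI φ θ τ -> mndI ψ θ (τ ∗ ω))
      /\ (forall (T T' T'' : Monad K) (V W : Hom (mk T) (mk T'))
            (V' W' : Hom (mk T') (mk T''))
            (ψ : Psi T T' V) (φ : Psi T T' W) (ψ' : Psi T' T'' V') (φ' : Psi T' T'' W')
            (ω : C2 V W) (ω' : C2 V' W'),
            emw1 T T' V ψ -> emw1 T T' W φ -> emw1 T' T'' V' ψ' -> emw1 T' T'' W' φ' ->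
            mndI ψ φ ω -> mndI ψ' φ' ω' ->
            mndI (comp_psi ψ' ψ) (comp_psi φ' φ) (ω' ⋆ ω)) )
    /\
    ( (forall (T T' : Monad K) (V W : Hom (mk T) (mk T'))
            (ψ : Psi T T' V) (φ : Psi T T' W) (ω : C2 V W),
            emw1 T T' V ψ -> emw1 T T' W φ -> mndI ψ φ ω -> emw2 ψ φ (GI ψ ω))
      /\ (forall (T T' : Monad K) (V : Hom (mk T) (mk T')) (ψ : Psi T T' V),
            emw1 T T' V ψ -> GI ψ (id2 V) = emw_id2 ψ)
      /\ (forall (T T' : Monad K) (V W U : Hom (mk T) (mk T'))
            (ψ : Psi T T' V) (φ : Psi T T' W) (θ : Psi T T' U) (ω : C2 V W) (τ : C2 W U),
            emw1 T T' V ψ -> emw1 T T' W φ -> emw1 T T' U θ ->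
            mndI ψ φ ω -> mndI φ θ τ ->
            GI ψ (τ ∗ ω) = emw_vcomp (GI φ τ) (GI ψ ω))
      /\ (forall (T T' T'' : Monad K) (V W : Hom (mk T) (mk T'))
            (V' W' : Hom (mk T') (mk T''))
            (ψ : Psi T T' V) (φ : Psi T T' W) (ψ' : Psi T' T'' V') (φ' : Psi T' T'' W')
            (ω : C2 V W) (ω' : C2 V' W'),
            emw1 T T' V ψ -> emw1 T T' W φ -> emw1 T' T'' V' ψ' -> emw1 T' T'' W' φ' ->
            mndI ψ φ ω -> mndI ψ' φ' ω' ->
            GI (comp_psi ψ' ψ) (ω' ⋆ ω) = emw_hcomp ψ (GI ψ' ω') (GI ψ ω)) ) )
  /\
  ( ( (forall (T T' : Monad K) (V : Hom (mk T) (mk T')) (ψ : Psi T T' V),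
          emw1 T T' V ψ -> mndP ψ ψ (id2 V))
      /\ (forall (T T' : Monad K) (V W U : Hom (mk T) (mk T'))
            (ψ : Psi T T' V) (φ : Psi T T' W) (θ : Psi T T' U) (ω : C2 V W) (τ : C2 W U),
            emw1 T T' V ψ -> emw1 T T' W φ -> emw1 T T' U θ ->
            mndP ψ φ ω -> mndP φ θ τ -> mndP ψ θ (τ ∗ ω))
      /\ (forall (T T' T'' : Monad K) (V W : Hom (mk T) (mk T'))
            (V' W' : Hom (mk T') (mk T''))
            (ψ : Psi T T' V) (φ : Psi T T' W) (ψ' : Psi T' T'' V') (φ' : Psi T' T'' W')
            (ω : C2 V W) (ω' : C2 V' W'),
            emw1 T T' V ψ -> emw1 T T' W φ -> emw1 T' T'' V' ψ' -> emw1 T' T'' W' φ' ->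
            mndP ψ φ ω -> mndP ψ' φ' ω' ->
            mndP (comp_psi ψ' ψ) (comp_psi φ' φ) (ω' ⋆ ω)) )
    /\
    ( (forall (T T' : Monad K) (V W : Hom (mk T) (mk T'))
            (ψ : Psi T T' V) (φ : Psi T T' W) (ω : C2 V W),
            emw1 T T' V ψ -> emw1 T T' W φ -> mndP ψ φ ω -> emw2 ψ φ (GP φ ω))
      /\ (forall (T T' : Monad K) (V : Hom (mk T) (mk T')) (ψ : Psi T T' V),
            emw1 T T' V ψ -> GP ψ (id2 V) = emw_id2 ψ)
      /\ (forall (T T' : Monad K) (V W U : Hom (mk T) (mk T'))
            (ψ : Psi T T' V) (φ : Psi T T' W) (θ : Psi T T' U) (ω : C2 V W) (τ : C2 W U),
            emw1 T T' V ψ -> emw1 T T' W φ -> emw1 T T' U θ ->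
            mndP ψ φ ω -> mndP φ θ τ ->
            GP θ (τ ∗ ω) = emw_vcomp (GP θ τ) (GP φ ω))
      /\ (forall (T T' T'' : Monad K) (V W : Hom (mk T) (mk T'))
            (V' W' : Hom (mk T') (mk T''))
            (ψ : Psi T T' V) (φ : Psi T T' W) (ψ' : Psi T' T'' V') (φ' : Psi T' T'' W')
            (ω : C2 V W) (ω' : C2 V' W'),
            emw1 T T' V ψ -> emw1 T T' W φ -> emw1 T' T'' V' ψ' -> emw1 T' T'' W' φ' ->
            mndP ψ φ ω -> mndP ψ' φ' ω' ->
            GP (comp_psi φ' φ) (ω' ⋆ ω) = emw_hcomp ψ (GP φ' ω') (GP φ ω)) ) ).
Proof.
  split; [|split].
  - split; [|split; [|split]].
    + intro T; apply emw1_id.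
    + intros; eapply emw1_comp; eauto.
    + intros; apply comp_psiA.
    + intros; split; [apply comp_psi_idr | apply comp_psi_idl].
  - split; split; [| split | | split; [| split]].
    + intros; apply mndI_id2; auto.
    + intros; eapply mndI_vcomp; eauto.
    + intros; eapply mndI_hcomp; eauto.
    + intros; eapply GI_emw2; eauto.
    + intros; apply GI_id2.
    + intros; eapply GI_vcomp; eauto.
    + intros; eapply GI_hcomp; eauto.
  - split; split; [| split | | split; [| split]].
    + intros; apply mndP_id2; auto.
    + intros; eapply mndP_vcomp; eauto.
    + intros; eapply mndP_hcomp; eauto.
    + intros; eapply GP_emw2; eauto.
    + intros; apply GP_id2.
    + intros; eapply GP_vcomp; eauto.
    + intros; eapply GP_hcomp; eauto.
Qed.
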